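(* Let $\mathcal{A}=\mathcal{R}*_K\mathcal{S}*_L\mathcal{T}\in\mathbb{C}^{I_1\times\cdots\times I_N\times J_1\times\cdots\times J_M}$, where $\mathcal{R}\in\mathbb{C}^{I_1\times\cdots\times I_N\times H_1\times\cdots\times H_K}$, $\mathcal{S}\in\mathbb{C}^{H_1\times\cdots\times H_K\times G_1\times\cdots\times G_L}$ and $\mathcal{T}\in\mathbb{C}^{G_1\times\cdots\times G_L\times J_1\times\cdots\times J_M}$. Then $$\mathcal{A}^{\dagger}=(\mathcal{R}*_K\mathcal{S}*_L\mathcal{T})^{\dagger}=(\mathcal{R}^{\dagger}*_N\mathcal{A})^{\dagger}*_K\mathcal{R}^{\dagger}*_N\mathcal{A}*_M\mathcal{T}^{\dagger}*_L(\mathcal{A}*_M\mathcal{T}^{\dagger})^{\dagger}=(\mathcal{R}^{\dagger}*_N\mathcal{A})^{\dagger}*_K\mathcal{S}*_L(\mathcal{A}*_M\mathcal{T}^{\dagger})^{\dagger}.$$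
   Context: $\mathbb{C}^{I_1\times\cdots\times I_N}$ denotes the set of complex tensors of order $N$ and dimension $I_1\times\cdots\times I_N$. For $\mathcal{A}\in\mathbb{C}^{I_1\times\cdots\times I_N\times K_1\times\cdots\times K_N}$ and $\mathcal{B}\in\mathbb{C}^{K_1\times\cdots\times K_N\times J_1\times\cdots\times J_M}$, the Einstein product $\mathcal{A}*_N\mathcal{B}$ is defined by $(\mathcal{A}*_N\mathcal{B})_{i_1\dots i_N j_1\dots j_M}=\sum_{k_1,\dots,k_N}a_{i_1\dots i_N k_1\dots k_N}b_{k_1\dots k_N j_1\dots j_M}$; it is associative. $\mathcal{A}^H$ denotes the conjugate transpose (swap the two groups of indices and conjugate entries). For $\mathcal{A}\in\mathbb{C}^{I_1\times\cdots\times I_N\times J_1\times\cdots\times J_M}$ the Moore–Penrose inverse $\mathcal{A}^{\dagger}$ is the unique $\mathcal{X}\in\mathbb{C}^{J_1\times\cdots\times J_M\times I_1\times\cdots\times I_N}$ with $\mathcal{A}*_M\mathcal{X}*_N\mathcal{A}=\mathcal{A}$, $\mathcal{X}*_N\mathcal{A}*_M\mathcal{X}=\mathcal{X}$, $(\mathcal{A}*_M\mathcal{X})^H=\mathcal{A}*_M\mathcal{X}$, $(\mathcal{X}*_N\mathcal{A})^H=\mathcal{X}*_N\mathcal{A}$. *)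

From HB Require Import structures.
From mathcomp Require Import all_boot all_order all_algebra.
From Stdlib Require Import ClassicalEpsilon.
Set Implicit Arguments. Unset Strict Implicit. Unset Printing Implicit Defensive.
Import Order.TTheory GRing.Theory Num.Theory.
Local Open Scope ring_scope.

(* Multi-indices for the dimension list d = [:: I_1; ...; I_N]:
   a multi-index is a function k |-> i_k with i_k < I_k. *)
Definition mindex (d : seq nat) : finType :=
  {dffun forall k : 'I_(size d), 'I_(nth 0%N d k)}.

Definition tensor (C : Type) (I J : seq nat) := mindex I -> mindex J -> C.

Section Tensors.
Variable C : numClosedFieldType.

Definition einstein (I K J : seq nat) (A : tensor C I K) (B : tensor C K J)
  : tensor C I J :=
  fun i j => \sum_(k : mindex K) A i k * B k j.

Definition ctrans (I J : seq nat) (A : tensor C I J) : tensor C J I :=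
  fun j i => (A i j)^*.

Definition is_MP (I J : seq nat) (A : tensor C I J) (X : tensor C J I) : Prop :=
  [/\ einstein (einstein A X) A = A,
      einstein (einstein X A) X = X,
      ctrans (einstein A X) = einstein A X &
      ctrans (einstein X A) = einstein X A].

Definition pinv (I J : seq nat) (A : tensor C I J) : tensor C J I :=
  epsilon (inhabits (fun _ _ => 0)) (fun X => is_MP A X).

End Tensors.

(* The tensor [pinv] is the matrix Moore-Penrose inverse transported along
   the flattening of the two index groups; it exists by a full-rank
   factorization, and everything else is algebra with the associative
   Einstein product and the conjugate transpose.  Write [Rd = R^+] and
   [Td = T^+].  Since [A] factors both as [R (Rd A)] and as [(A Td) T], the
   candidate [X = (Rd A)^+ Rd A Td (A Td)^+] satisfies [A X = (A Td)(A Td)^+]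
   and [X A = (Rd A)^+ (Rd A)]; both are Hermitian and the other two Penrose
   equations follow, so [X = A^+].  Finally [P^+ E = P^+] for every Hermitian
   [E] with [E P = P]; applied to [E = Rd R] (and symmetrically to
   [E = T Td]) this turns the middle factor [Rd A Td = Rd R S T Td] into
   [S]. *)

From Stdlib Require Import FunctionalExtensionality ClassicalEpsilon.
From mathcomp Require Import all_boot all_order all_algebra.
Set Implicit Arguments. Unset Strict Implicit. Unset Printing Implicit Defensive.
Import GRing.Theory.
Local Open Scope ring_scope.
Local Open Scope sesquilinear_scope.

Section MatrixMoorePenrose.
Variable C : numClosedFieldType.

Definition is_mxMP m n (A : 'M[C]_(m, n)) (X : 'M[C]_(n, m)) : Prop :=
  [/\ A *m X *m A = A, X *m A *m X = X,
      (A *m X)^t* = A *m X & (X *m A)^t* = X *m A].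

Lemma trmxC_mul m n p (A : 'M[C]_(m, n)) (B : 'M[C]_(n, p)) :
  (A *m B)^t* = B^t* *m A^t*.
Proof. by rewrite trmx_mul map_mxM. Qed.

Lemma trmxC_inv n (A : 'M[C]_n) : (invmx A)^t* = invmx (A^t*).
Proof. by rewrite trmx_inv map_invmx. Qed.

Lemma mxrank_trmxC m n (A : 'M[C]_(m, n)) : \rank (A^t*) = \rank A.
Proof. by rewrite mxrank_map mxrank_tr. Qed.

Lemma gram_unitmx m n (M : 'M[C]_(m, n)) : row_free M -> M *m M^t* \in unitmx.
Proof.
move=> freeM; rewrite -row_free_unit; apply/inj_row_free => v.
rewrite mulmxA => vMM0.
have : dotmx (v *m M) (v *m M) == 0.
  by rewrite dotmxE trmxC_mul mulmxA vMM0 mul0mx mxE.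
by rewrite dnorm_eq0 mulmx_free_eq0 // => /eqP.
Qed.

Lemma is_mxMP_full_rank_factor m r n (F : 'M[C]_(m, r)) (G : 'M[C]_(r, n)) :
  row_full F -> row_free G ->
  is_mxMP (F *m G)
    (G^t* *m invmx (G *m G^t*) *m invmx (F^t* *m F) *m F^t*).
Proof.
move=> fullF freeG.
have uF : F^t* *m F \in unitmx.
  have freeFt : row_free (F^t*) by rewrite /row_free mxrank_trmxC.
  by have := gram_unitmx freeFt; rewrite trmxCK.
have uG := gram_unitmx freeG.
set P := invmx (G *m G^t*); set Q := invmx (F^t* *m F).
have hermP : P^t* = P by rewrite trmxC_inv trmxC_mul trmxCK.
have hermQ : Q^t* = Q by rewrite trmxC_inv trmxC_mul trmxCK.
have GK k (Z : 'M_(k, r)) : Z *m G *m G^t* *m P = Z.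
  by rewrite -(mulmxA Z) -mulmxA mulmxV ?mulmx1.
have FK k (Z : 'M_(k, r)) : Z *m Q *m F^t* *m F = Z.
  by rewrite -!mulmxA mulVmx ?mulmx1.
have AX : F *m G *m (G^t* *m P *m Q *m F^t*) = F *m Q *m F^t*.
  by rewrite !mulmxA GK.
have XA : G^t* *m P *m Q *m F^t* *m (F *m G) = G^t* *m P *m G.
  by rewrite !mulmxA FK.
rewrite /is_mxMP AX XA; split.
- by rewrite !mulmxA FK.
- by rewrite !mulmxA GK.
- by rewrite !trmxC_mul trmxCK hermQ mulmxA.
- by rewrite !trmxC_mul trmxCK hermP mulmxA.
Qed.

Lemma is_mxMP_exists m n (A : 'M[C]_(m, n)) : exists X, is_mxMP A X.
Proof.
have := is_mxMP_full_rank_factor (col_base_full A) (row_base_free A).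
by rewrite mulmx_base; eexists; eassumption.
Qed.

End MatrixMoorePenrose.

Local Notation "a ** b" := (einstein a b) (at level 40, left associativity).

Section EinsteinProduct.
Variable C : numClosedFieldType.

Lemma einsteinA (I K L J : seq nat) (A : tensor C I K) (B : tensor C K L)
    (D : tensor C L J) :
  A ** B ** D = A ** (B ** D).
Proof.
apply: functional_extensionality => i; apply: functional_extensionality => j.
rewrite /einstein; under eq_bigr do rewrite big_distrl /=.
rewrite exchange_big /=; apply: eq_bigr => k _.
by rewrite big_distrr /=; apply: eq_bigr => l _; rewrite mulrA.
Qed.

Lemma ctrans_einstein (I K J : seq nat) (A : tensor C I K) (B : tensor C K J) :
  ctrans (A ** B) = ctrans B ** ctrans A.
Proof.
apply: functional_extensionality => j; apply: functional_extensionality => i.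
rewrite /ctrans /einstein rmorph_sum; apply: eq_bigr => k _.
by rewrite rmorphM mulrC.
Qed.

Definition tensor_mx (I J : seq nat) (A : tensor C I J)
    : 'M[C]_(#|{: mindex I}|, #|{: mindex J}|) :=
  \matrix_(i, j) A (enum_val i) (enum_val j).

Definition mx_tensor (I J : seq nat)
    (M : 'M[C]_(#|{: mindex I}|, #|{: mindex J}|)) : tensor C I J :=
  fun i j => M (enum_rank i) (enum_rank j).

Lemma tensor_mxK (I J : seq nat) : cancel (@tensor_mx I J) (@mx_tensor I J).
Proof.
move=> A; apply: functional_extensionality => i.
apply: functional_extensionality => j.
by rewrite /mx_tensor /tensor_mx mxE !enum_rankK.
Qed.

Lemma mx_tensorK (I J : seq nat) : cancel (@mx_tensor I J) (@tensor_mx I J).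
Proof.
by move=> M; apply/matrixP => i j; rewrite /tensor_mx /mx_tensor mxE !enum_valK.
Qed.

Lemma tensor_mx_einstein (I K J : seq nat) (A : tensor C I K)
    (B : tensor C K J) :
  tensor_mx (einstein A B) = tensor_mx A *m tensor_mx B.
Proof.
apply/matrixP => i j; rewrite /tensor_mx !mxE /einstein.
rewrite (reindex (@enum_val _ (mem {: mindex K}))) /=; last first.
  by exists enum_rank => k _; rewrite ?enum_valK ?enum_rankK.
by apply: eq_bigr => k _; rewrite !mxE.
Qed.

Lemma tensor_mx_ctrans (I J : seq nat) (A : tensor C I J) :
  tensor_mx (ctrans A) = (tensor_mx A)^t*.
Proof. by apply/matrixP => i j; rewrite /tensor_mx !mxE. Qed.

Lemma is_MP_exists (I J : seq nat) (A : tensor C I J) : exists X, is_MP A X.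
Proof.
have [X [AXA XAX hermAX hermXA]] := is_mxMP_exists (tensor_mx A).
exists (mx_tensor X); split; apply: (can_inj (@tensor_mxK _ _));
  by rewrite ?tensor_mx_ctrans !tensor_mx_einstein ?tensor_mx_ctrans mx_tensorK.
Qed.

Lemma pinvP (I J : seq nat) (A : tensor C I J) : is_MP A (pinv A).
Proof. exact: epsilon_spec (is_MP_exists A). Qed.

End EinsteinProduct.

Section PenroseEquations.
Variable C : numClosedFieldType.

Section OneInverse.
Variables (I J : seq nat) (A : tensor C I J) (X : tensor C J I).
Hypothesis MP_AX : is_MP A X.

Lemma is_MP_mulKA (K : seq nat) (Z : tensor C J K) :
  A ** (X ** (A ** Z)) = A ** Z.
Proof. by case: MP_AX => AXA _ _ _; rewrite -!einsteinA AXA. Qed.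

Lemma is_MP_mulKX (K : seq nat) (Z : tensor C I K) :
  X ** (A ** (X ** Z)) = X ** Z.
Proof. by case: MP_AX => _ XAX _ _; rewrite -!einsteinA XAX. Qed.

(* [X = X (A X)^* = X X^* A^* = X X^* A^* E = X E],
   as [A^* = (E A)^* = A^* E]. *)
Lemma is_MP_absorbl (E : tensor C I I) :
  ctrans E = E -> E ** A = A -> X ** E = X.
Proof.
case: MP_AX => _ XAX hermAX _ hermE EA.
have AtE : ctrans A ** E = ctrans A.
  by rewrite -[in RHS]EA ctrans_einstein hermE.
have XAX' : X ** (A ** X) = X by rewrite -einsteinA.
by rewrite -[in LHS]XAX' -hermAX ctrans_einstein !einsteinA AtE
  -ctrans_einstein hermAX XAX'.
Qed.

Lemma is_MP_absorbr (E : tensor C J J) :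
  ctrans E = E -> A ** E = A -> E ** X = X.
Proof.
case: MP_AX => _ XAX _ hermXA hermE AE.
have EAt : E ** ctrans A = ctrans A.
  by rewrite -[in RHS]AE ctrans_einstein hermE.
by rewrite -[in LHS]XAX -hermXA ctrans_einstein !einsteinA -einsteinA EAt
  -einsteinA -ctrans_einstein hermXA XAX.
Qed.

End OneInverse.

Lemma is_MP_unique (I J : seq nat) (A : tensor C I J) (X Y : tensor C J I) :
  is_MP A X -> is_MP A Y -> X = Y.
Proof.
move=> MP_X MP_Y; have [AXA _ _ hermXA] := MP_X; have [AYA _ hermAY _] := MP_Y.
have XAY : X ** (A ** Y) = X by exact: (is_MP_absorbl MP_X hermAY AYA).
have XAY' : X ** A ** Y = Y.
  by apply: (is_MP_absorbr MP_Y hermXA); rewrite -einsteinA AXA.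
by rewrite -{1}XAY -einsteinA XAY'.
Qed.

Lemma pinv_eq (I J : seq nat) (A : tensor C I J) (X : tensor C J I) :
  is_MP A X -> pinv A = X.
Proof. exact/is_MP_unique/pinvP. Qed.

Section ReverseOrder.
Variables (I H G J : seq nat) (A : tensor C I J).
Variables (R : tensor C I H) (Rd : tensor C H I).
Variables (T : tensor C G J) (Td : tensor C J G).
Hypotheses (RRdA : R ** (Rd ** A) = A) (ATdT : A ** Td ** T = A).

Lemma is_MP_reverse_order :
  is_MP A (pinv (Rd ** A) ** Rd ** A ** Td ** pinv (A ** Td)).
Proof.
set P := Rd ** A; set Q := A ** Td; set X := _ ** pinv Q.
have XE1 : X = pinv P ** (P ** (Td ** pinv Q)) by rewrite /X !einsteinA.
have XE2 : X = pinv P ** (Rd ** (Q ** pinv Q)) by rewrite /X !einsteinA.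
have PE : Rd ** A = P by []; have QE : A ** Td = Q by [].
have RP : R ** P = A := RRdA; have QT : Q ** T = A := ATdT.
clearbody X P Q.
have [_ _ _ hermPdP] := pinvP P; have [QQdQ _ hermQQd _] := pinvP Q.
have AX : A ** X = Q ** pinv Q.
  by rewrite XE1 -{1}RP einsteinA (is_MP_mulKA (pinvP P)) -einsteinA RP
    -einsteinA QE.
have XA : X ** A = pinv P ** P.
  by rewrite XE2 -QT !einsteinA (is_MP_mulKA (pinvP Q)) QT PE.
split.
- by rewrite AX -[in LHS]QT -einsteinA QQdQ.
- by rewrite XA [in LHS]XE1 !einsteinA (is_MP_mulKX (pinvP P)) -XE1.
- by rewrite AX hermQQd.
- by rewrite XA hermPdP.
Qed.

End ReverseOrder.

End PenroseEquations.

Theorem theorem3p5 (C : numClosedFieldType) (I H G J : seq nat)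
  (R : tensor C I H) (S : tensor C H G) (T : tensor C G J) :
  let A := einstein (einstein R S) T in
  pinv A =
    einstein (einstein (einstein (einstein
      (pinv (einstein (pinv R) A)) (pinv R)) A) (pinv T))
      (pinv (einstein A (pinv T)))
  /\
  pinv A =
    einstein (einstein (pinv (einstein (pinv R) A)) S)
      (pinv (einstein A (pinv T))).
Proof.
move=> A.
have [_ _ _ hermRdR] := pinvP R; have [TTdT TdTTd hermTTd _] := pinvP T.
have RRdA : R ** (pinv R ** A) = A.
  by rewrite /A !einsteinA (is_MP_mulKA (pinvP R)).
have ATdT : A ** pinv T ** T = A.
  by rewrite /A !einsteinA -(einsteinA T) TTdT.
rewrite (pinv_eq (is_MP_reverse_order RRdA ATdT)); split=> //.
have PdRdR : pinv (pinv R ** A) ** (pinv R ** R) = pinv (pinv R ** A).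
  apply: (is_MP_absorbl (pinvP _) hermRdR).
  by rewrite einsteinA (is_MP_mulKX (pinvP R)).
have TTdQd : T ** pinv T ** pinv (A ** pinv T) = pinv (A ** pinv T).
  apply: (is_MP_absorbr (pinvP _) hermTTd).
  by rewrite einsteinA -(einsteinA (pinv T)) TdTTd.
(* [einsteinA] also reassociates inside the local definition [A]. *)
by rewrite -[in RHS]PdRdR -[in RHS]TTdQd !einsteinA.
Qed.
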